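(* Let $p,q$ be positive integers, $e\in\mathbb{R}^p$ the vector of all ones, and let $(z,w)\in\mathbb{R}^p\times\mathbb{R}^q$ satisfy $z^+\not\ge\|w\|e$ and $\langle z^-,e\rangle<\|w\|$. Assume further that $0<\alpha<1$ and $\langle e,|z|\rangle<\alpha(1+\alpha)^{-1}\|w\|$. For $\lambda\ge0$ let $N(\lambda):=\operatorname{diag}\big(-\operatorname{sgn}([(\lambda+1)z-\|w\|e]^-)\big)$, and given $\lambda_0>0$ define $\{\lambda_k\}$ by $N_k:=N(\lambda_k)$ and $$\big[-\|w\|+\langle e,N_kz\rangle\big]\lambda_{k+1}=-\langle e,N_k[z-\|w\|e]\rangle,\qquad k=0,1,\ldots.$$ Then for any $\lambda_0>0$ the sequence $\{\lambda_k\}$ is well defined and converges linearly to the unique solution $\lambda_*$ of $\lambda\|w\|=\langle e,[(\lambda+1)z-\|w\|e]^-\rangle$, namely $$|\lambda_*-\lambda_{k+1}|\le\alpha|\lambda_*-\lambda_k|,\qquad k=0,1,\ldots.$$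
   Context: For $\alpha\in\mathbb{R}$, $\alpha^+:=\max(\alpha,0)$ and $\alpha^-:=\max(-\alpha,0)$; for vectors, $z^+$, $z^-$, $|z|$ and $\operatorname{sgn}(z)$ are taken componentwise (with $\operatorname{sgn}(0)=0$), and $\operatorname{diag}(z)$ is the diagonal matrix with diagonal $z_1,\dots,z_p$. The order $\ge$ is componentwise; $z^+\not\ge\|w\|e$ means that $z^+\ge\|w\|e$ fails. *)

(* Vectors of R^p are column vectors 'cV[R]_p over a
   real closed field R (the reals are an instance). *)
From HB Require Import structures.
From mathcomp Require Import all_boot all_order all_algebra.
Set Implicit Arguments. Unset Strict Implicit. Unset Printing Implicit Defensive.
Import Order.TTheory GRing.Theory Num.Theory.
Local Open Scope ring_scope.

Section Defs.
Variable R : rcfType.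

Definition posp (a : R) : R := Num.max a 0.
Definition negp (a : R) : R := Num.max (- a) 0.

Definition vpos n (z : 'cV[R]_n) : 'cV[R]_n := map_mx posp z.
Definition vneg n (z : 'cV[R]_n) : 'cV[R]_n := map_mx negp z.
Definition vabs n (z : 'cV[R]_n) : 'cV[R]_n := map_mx (fun a => `|a|) z.
Definition vsgn n (z : 'cV[R]_n) : 'cV[R]_n := map_mx (fun a => Num.sg a) z.

Definition onesv n : 'cV[R]_n := const_mx 1.

Definition diagv n (z : 'cV[R]_n) : 'M[R]_n := diag_mx z^T.

Definition dotv n (u v : 'cV[R]_n) : R := \sum_i u i 0 * v i 0.
Definition enorm n (w : 'cV[R]_n) : R := Num.sqrt (dotv w w).

Definition Nmat p q (z : 'cV[R]_p) (w : 'cV[R]_q) (l : R) : 'M[R]_p :=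
  diagv (- vsgn (vneg ((l + 1) *: z - enorm w *: onesv p))).

Definition lam_den p q (z : 'cV[R]_p) (w : 'cV[R]_q) (l : R) : R :=
  - enorm w + dotv (onesv p) (Nmat z w l *m z).

Definition lam_rhs p q (z : 'cV[R]_p) (w : 'cV[R]_q) (l : R) : R :=
  - dotv (onesv p) (Nmat z w l *m (z - enorm w *: onesv p)).

Fixpoint lam_seq p q (z : 'cV[R]_p) (w : 'cV[R]_q) (l0 : R) (k : nat) : R :=
  match k with
  | 0 => l0
  | k'.+1 => let l := lam_seq z w l0 k' in lam_rhs z w l / lam_den z w l
  end.

End Defs.

Arguments onesv {R} n.

(* Write a_i(l) = ||w|| - (l + 1) z_i, so that the equation for lambda_* reads
   l ||w|| = phi(l) := sum_i a_i(l)^+.  Freezing the active set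
   S = {i | a_i(l) > 0} gives the affine model l ||w|| = sum_(i in S) a_i(l),
   and lambda_(k+1) is the root of the model frozen at lambda_k.  Freezing the
   active set at l instead of at m changes the model at m by at most
   ||z||_1 |m - l|, while the slope ||w|| + sum_(i in S) z_i of every model is
   at least ||w|| - ||z||_1 >= ||z||_1 / alpha.  Hence the iteration map T
   moves every point alpha-closer to any root, and |T(T l) - T l| <=
   alpha |T l - l|.  As T takes finitely many values (one per active set), a
   value minimizing |T x - x| over its range is a fixed point, i.e. a root. *)
From HB Require Import structures.
From mathcomp Require Import all_boot all_order all_algebra.
From mathcomp Require Import ring lra.
Import Order.TTheory GRing.Theory Num.Theory.
Local Open Scope ring_scope.
Set Implicit Arguments. Unset Strict Implicit.

Lemma le_mull_lt1_eq0 (R : realDomainType) (a x : R) :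
  a < 1 -> 0 <= x -> x <= a * x -> x = 0.
Proof. by move=> a_lt1 x_ge0 x_le; apply/eqP; rewrite eq_le x_ge0 andbT; nra. Qed.

Lemma finite_range_fixpoint (R : realDomainType) (I : finType)
    (f : I -> R) (g : R -> I) (a : R) :
  a < 1 -> (forall x, `|f (g (f (g x))) - f (g x)| <= a * `|f (g x) - x|) ->
  exists x, f (g x) = x.
Proof.
move=> a_lt1 orbit.
pose d i := `|f (g (f i)) - f i|.
have [i0 _ i0_min] := @arg_minP _ R _ (g 0) predT d isT.
exists (f i0); apply/eqP; rewrite -subr_eq0 -normr_eq0; apply/eqP.
apply: (le_mull_lt1_eq0 a_lt1 (normr_ge0 _)).
exact: le_trans (i0_min (g (f i0)) isT) (orbit (f i0)).
Qed.

Section ActiveSet.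
Variables (R : rcfType) (p q : nat) (z : 'cV[R]_p) (w : 'cV[R]_q).
Local Notation W := (enorm w).

Definition slack (l : R) (i : 'I_p) : R := W - (l + 1) * z i 0.
Definition phi (l : R) : R := \sum_i Num.max (slack l i) 0.
Definition active (l : R) : {set 'I_p} := [set i | 0 < slack l i].
Definition model (S : {set 'I_p}) (m : R) : R := \sum_(i in S) slack m i.
Definition slope (S : {set 'I_p}) : R := W + \sum_(i in S) z i 0.
Definition model_root (S : {set 'I_p}) : R :=
  (\sum_(i in S) (W - z i 0)) / slope S.
Definition newton_step (l : R) : R := model_root (active l).
Definition l1z : R := \sum_i `|z i 0|.

Lemma l1z_ge0 : 0 <= l1z.
Proof. by apply: sumr_ge0 => i _. Qed.

Lemma opp_shifted_slack l i : - ((l + 1) * z i 0 - W * 1) = slack l i.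
Proof. by rewrite /slack; ring. Qed.

Lemma sg_max0 (x : R) : Num.sg (Num.max x 0) = if 0 < x then 1 else 0.
Proof. by case: (ltgtP x 0) => [_|x_gt0|->]; rewrite ?sgr0 ?gtr0_sg. Qed.

Lemma dotv_Nmat l (x : 'cV[R]_p) :
  dotv (onesv p) (Nmat z w l *m x) = - \sum_(i in active l) x i 0.
Proof.
rewrite /dotv /Nmat /diagv mul_diag_mx (big_mkcond (fun i => i \in active l)) -sumrN.
apply: eq_bigr => i _.
rewrite !mxE /negp opp_shifted_slack sg_max0 mul1r in_set.
by case: ifP; rewrite ?mulN1r ?oppr0 ?mul0r.
Qed.

Lemma dotv_vneg l :
  dotv (onesv p) (vneg ((l + 1) *: z - W *: onesv p)) = phi l.
Proof. by apply: eq_bigr => i _; rewrite !mxE /negp mul1r opp_shifted_slack. Qed.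

Lemma dotv_vabs : dotv (onesv p) (vabs z) = l1z.
Proof. by apply: eq_bigr => i _; rewrite !mxE mul1r. Qed.

Lemma lam_den_eq l : lam_den z w l = - slope (active l).
Proof. by rewrite /lam_den dotv_Nmat /slope opprD. Qed.

Lemma lam_seqS l0 k : lam_seq z w l0 k.+1 = newton_step (lam_seq z w l0 k).
Proof.
rewrite /= lam_den_eq /lam_rhs dotv_Nmat invrN mulrNN -sumrN.
by congr (_ / _); apply: eq_bigr => i _; rewrite !mxE mulr1 opprB.
Qed.

Lemma slope_ge S : W - l1z <= slope S.
Proof.
rewrite /slope lerD2l lerNl (le_trans (ler_norm _)) //.
rewrite normrN (le_trans (ler_norm_sum _ _ _)) // /l1z.
by rewrite [leRHS](bigID (mem S)) lerDl sumr_ge0.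
Qed.

Lemma model_root_subr_mul S m : slope S != 0 ->
  (model_root S - m) * slope S = model S m - m * W.
Proof.
move=> slope_neq0; rewrite mulrBl mulfVK // /model /slope /slack mulrDr.
have -> : \sum_(i in S) (W - (m + 1) * z i 0)
    = \sum_(i in S) (W - z i 0) - m * \sum_(i in S) z i 0.
  by rewrite mulr_sumr -sumrB; apply: eq_bigr => i _; ring.
ring.
Qed.

Lemma model_root_root S : slope S != 0 -> model_root S * W = model S (model_root S).
Proof.
move/(model_root_subr_mul (model_root S)); rewrite subrr mul0r.
by move/esym/eqP; rewrite subr_eq0 => /eqP.
Qed.

Lemma max0_if_dist (x y : R) :
  `|(if 0 < x then y else 0) - Num.max y 0| <= `|x - y|.
Proof.
case: (ltP 0 x) => x0; case: (ltP y 0) => y0; rewrite ?subrr ?normr0 //.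
- by rewrite subr0 ltr0_norm // ger0_norm; lra.
- by rewrite sub0r normrN ger0_norm // ler0_norm; lra.
Qed.

Lemma model_active_dist l m : `|model (active l) m - phi m| <= l1z * `|m - l|.
Proof.
rewrite /model /phi (big_mkcond (fun i => i \in active l)) -sumrB /l1z mulr_suml.
apply: le_trans (ler_norm_sum _ _ _) _; apply: ler_sum => i _.
rewrite in_set; apply: le_trans (max0_if_dist (slack l i) _) _.
have -> : slack l i - slack m i = (m - l) * z i 0 by rewrite /slack; ring.
by rewrite normrM mulrC.
Qed.

Lemma model_active l : model (active l) l = phi l.
Proof.
apply/eqP; rewrite -subr_eq0 -normr_le0.
by have := model_active_dist l l; rewrite subrr normr0 mulr0.
Qed.

Section Contraction.
Variable alpha : R.
Hypotheses (alpha_ge0 : 0 <= alpha) (l1z_small : l1z < alpha * (W - l1z)).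

Lemma slope_gt0 S : 0 < slope S.
Proof.
apply: lt_le_trans (slope_ge S).
rewrite ltNge; apply/negP => /(mulr_ge0_le0 alpha_ge0).
by rewrite leNgt (le_lt_trans l1z_ge0 l1z_small).
Qed.

(* The slope of every model is at least l1z / alpha. *)
Lemma model_root_dist S m t : 0 <= t ->
  `|model S m - m * W| <= l1z * t -> `|model_root S - m| <= alpha * t.
Proof.
move=> t_ge0 model_le; have slope_pos := slope_gt0 S.
rewrite -(ler_pM2r slope_pos) -{1}(gtr0_norm slope_pos) -normrM.
rewrite model_root_subr_mul ?gt_eqF // (le_trans model_le) // mulrAC.
apply: ler_wpM2r => //; apply: le_trans (ltW l1z_small) _.
exact: ler_wpM2l (slope_ge S).
Qed.

Lemma newton_step_contract mu l : mu * W = phi mu ->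
  `|newton_step l - mu| <= alpha * `|l - mu|.
Proof.
move=> root_mu; apply: model_root_dist => //.
by rewrite root_mu (distrC l) model_active_dist.
Qed.

Lemma newton_step_orbit l :
  `|newton_step (newton_step l) - newton_step l| <= alpha * `|newton_step l - l|.
Proof.
apply: model_root_dist => //; rewrite model_active.
have -> : newton_step l * W = model (active l) (newton_step l).
  exact: model_root_root (lt0r_neq0 (slope_gt0 _)).
by rewrite distrC model_active_dist.
Qed.

Lemma fixpoint_root mu : newton_step mu = mu -> mu * W = phi mu.
Proof.
move=> fix_mu; have := model_root_root (lt0r_neq0 (slope_gt0 (active mu))).
by rewrite -/(newton_step mu) fix_mu model_active.
Qed.

Hypothesis alpha_lt1 : alpha < 1.

Lemma exists_root : exists mu, mu * W = phi mu.
Proof.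
have [mu fix_mu] := finite_range_fixpoint alpha_lt1 newton_step_orbit.
by exists mu; apply: fixpoint_root.
Qed.

Lemma root_unique mu nu : mu * W = phi mu -> nu * W = phi nu -> nu = mu.
Proof.
move=> root_mu root_nu.
have fix_nu : newton_step nu = nu.
  apply/eqP; rewrite -subr_eq0 -normr_le0.
  by have := newton_step_contract nu root_nu; rewrite subrr normr0 mulr0.
apply/eqP; rewrite -subr_eq0 -normr_eq0; apply/eqP/(le_mull_lt1_eq0 alpha_lt1) => //.
by rewrite -{1}fix_nu newton_step_contract.
Qed.

End Contraction.
End ActiveSet.

Theorem proposition4 (R : rcfType) (p q : nat) (z : 'cV[R]_p) (w : 'cV[R]_q)
  (alpha : R) :
  (0 < p)%N -> (0 < q)%N ->
  ~ (forall i, enorm w <= vpos z i 0) ->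
  dotv (vneg z) (onesv p) < enorm w ->
  0 < alpha -> alpha < 1 ->
  dotv (onesv p) (vabs z) < alpha / (1 + alpha) * enorm w ->
  forall l0 : R, 0 < l0 ->
    (* well defined: the coefficient of lambda_{k+1} never vanishes *)
    (forall k, lam_den z w (lam_seq z w l0 k) != 0) /\
    exists lstar : R,
      lstar * enorm w = dotv (onesv p) (vneg ((lstar + 1) *: z - enorm w *: onesv p)) /\
      (forall l : R,
         l * enorm w = dotv (onesv p) (vneg ((l + 1) *: z - enorm w *: onesv p)) ->
         l = lstar) /\
      (forall k, `|lstar - lam_seq z w l0 k.+1| <= alpha * `|lstar - lam_seq z w l0 k|).
Proof.
move=> _ _ _ _ alpha_gt0 alpha_lt1 small l0 _.
have alpha_ge0 := ltW alpha_gt0.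
have l1z_small : l1z z < alpha * (enorm w - l1z z).
  by move: small; rewrite dotv_vabs mulrAC ltr_pdivlMr; lra.
have [mu root_mu] := exists_root alpha_ge0 l1z_small alpha_lt1.
split=> [k|].
  by rewrite lam_den_eq oppr_eq0 gt_eqF // (slope_gt0 alpha_ge0 l1z_small).
exists mu; rewrite !dotv_vneg; split=> //; split=> [l root_l|k].
  by apply: (root_unique alpha_ge0 l1z_small alpha_lt1) root_mu _; rewrite -dotv_vneg.
by rewrite lam_seqS !(distrC mu) newton_step_contract.
Qed.
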